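(* Let $\Delta$ be a thick building with Weyl group $W$, and let $G$ be a group acting strongly transitively on $\Delta$ with respect to the complete apartment system $\overline{\mathcal{A}}$. Fix an apartment $\Sigma_0\in\overline{\mathcal{A}}$, let $N=\mathrm{Stab}_G(\Sigma_0)$ and $T=\{t\in N \mid tC=C \text{ for all chambers } C \text{ of } \Sigma_0\}$. Then for a subgroup $H$ of $G$ the following are equivalent: (i) $H$ acts weakly transitively on $\Delta$; (ii) there exists $g\in G$ such that $g(nT)g^{-1}\cap H\neq\emptyset$ for all $n\in N$.
   Context: For a thick building $\Delta$ with Coxeter system $(W,S)$ of finite rank, $\overline{\mathcal{A}}$ denotes its complete system of apartments. A subset $\mathcal{A}\subseteq\overline{\mathcal{A}}$ is a system of apartments if any two chambers lie in a common apartment of $\mathcal{A}$. A type-preserving action of a group $H$ on $\Delta$ is strongly transitive with respect to $\mathcal{A}$ if $H$ acts transitively on $\{(C,\Sigma)\mid \Sigma\in\mathcal{A},\ C \text{ a chamber of }\Sigma\}$. A type-preserving action of $H$ on $\Delta$ is called weakly transitive if there exists an apartment $\Sigma\in\overline{\mathcal{A}}$ such that $\mathrm{Stab}_H(\Sigma)$ acts transitively on the chambers of $\Sigma$. (Note $N/T$ identifies with $W$, the type-preserving automorphism group of $\Sigma_0$.) *)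

(* abstract (possibly infinite) groups, Coxeter systems and
   buildings in the W-metric (W-distance) formulation (Abramenko-Brown, Ch. 5). *)
From Stdlib Require Import List.
Import ListNotations.
Set Implicit Arguments.
Unset Strict Implicit.

Record Grp := {
  gcar :> Type;
  gmul : gcar -> gcar -> gcar;
  ginv : gcar -> gcar;
  gone : gcar;
  gmulA : forall x y z, gmul x (gmul y z) = gmul (gmul x y) z;
  gmul1 : forall x, gmul gone x = x;
  gmulV : forall x, gmul (ginv x) x = gone
}.
Arguments gmul {g}.
Arguments ginv {g}.
Arguments gone {g}.

Fixpoint gpow (G : Grp) (x : G) (n : nat) : G :=
  match n with O => gone | S n => gmul x (gpow x n) end.

Definition is_hom (G H : Grp) (f : G -> H) : Prop :=
  forall x y, f (gmul x y) = gmul (f x) (f y).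

Definition is_subgroup (G : Grp) (H : G -> Prop) : Prop :=
  H gone /\ (forall x y, H x -> H y -> H (gmul x y)) /\ (forall x, H x -> H (ginv x)).

(* (W,S) is a Coxeter system iff W has the presentation
   < S | (s t)^{m(s,t)} = 1 > with m(s,t) the order of st, i.e. every map f from S
   to a group satisfying all relations (f s f t)^n = 1 whenever (s t)^n = 1 in W
   extends uniquely to a homomorphism W -> H. *)
Definition coxeter_system (W : Grp) (S : W -> Prop) : Prop :=
  (forall s, S s -> s <> gone /\ gmul s s = gone) /\
  (forall (H : Grp) (f : W -> H),
     (forall s t n, S s -> S t -> gpow (gmul s t) n = gone ->
                    gpow (gmul (f s) (f t)) n = gone) ->
     (exists phi : W -> H, is_hom phi /\ forall s, S s -> phi s = f s) /\
     (forall phi psi : W -> H, is_hom phi -> is_hom psi ->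
        (forall s, S s -> phi s = psi s) -> forall w, phi w = psi w)).

Definition finite_rank (W : Grp) (S : W -> Prop) : Prop :=
  exists l : list W, forall s, S s <-> In s l.

Definition word_prod (W : Grp) (l : list W) : W := fold_right gmul gone l.

Definition is_length (W : Grp) (S : W -> Prop) (w : W) (n : nat) : Prop :=
  (exists l, length l = n /\ Forall S l /\ word_prod l = w) /\
  (forall l, Forall S l -> word_prod l = w -> n <= length l).

Definition is_building (W : Grp) (S : W -> Prop) (Ch : Type) (delta : Ch -> Ch -> W)
  : Prop :=
  (forall C D, delta C D = gone <-> C = D) /\
  (forall C D C' s, S s -> delta C' C = s ->
     (delta C' D = gmul s (delta C D) \/ delta C' D = delta C D) /\
     ((exists n, is_length S (delta C D) n /\
                 is_length S (gmul s (delta C D)) (Datatypes.S n)) ->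
      delta C' D = gmul s (delta C D))) /\
  (forall C D s, S s -> exists C', delta C' C = s /\ delta C' D = gmul s (delta C D)).

(* thick: every panel contains at least three chambers *)
Definition thick (W : Grp) (S : W -> Prop) (Ch : Type) (delta : Ch -> Ch -> W) : Prop :=
  forall C s, S s -> exists D1 D2, D1 <> D2 /\ delta C D1 = s /\ delta C D2 = s.

(* apartments of the complete apartment system: images of isometries W -> Ch *)
Definition apartment (W : Grp) (Ch : Type) (delta : Ch -> Ch -> W) (Sigma : Ch -> Prop)
  : Prop :=
  exists phi : W -> Ch,
    (forall x y, delta (phi x) (phi y) = gmul (ginv x) y) /\
    (forall D, Sigma D <-> exists x, phi x = D).

Definition is_tp_action (W G : Grp) (Ch : Type) (delta : Ch -> Ch -> W)
  (act : G -> Ch -> Ch) : Prop :=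
  (forall C, act gone C = C) /\
  (forall g h C, act (gmul g h) C = act g (act h C)) /\
  (forall g C D, delta (act g C) (act g D) = delta C D).

Definition stabilizes (G : Grp) (Ch : Type) (act : G -> Ch -> Ch) (g : G)
  (Sigma : Ch -> Prop) : Prop :=
  forall D, Sigma D <-> exists E, Sigma E /\ act g E = D.

Definition strongly_transitive (W G : Grp) (Ch : Type) (delta : Ch -> Ch -> W)
  (act : G -> Ch -> Ch) (H : G -> Prop) : Prop :=
  forall C Sigma C' Sigma',
    apartment delta Sigma -> Sigma C -> apartment delta Sigma' -> Sigma' C' ->
    exists h, H h /\ act h C = C' /\
      (forall D, Sigma' D <-> exists E, Sigma E /\ act h E = D).

Definition weakly_transitive (W G : Grp) (Ch : Type) (delta : Ch -> Ch -> W)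
  (act : G -> Ch -> Ch) (H : G -> Prop) : Prop :=
  exists Sigma, apartment delta Sigma /\
    forall C D, Sigma C -> Sigma D ->
      exists h, H h /\ stabilizes act h Sigma /\ act h C = D.


Set Implicit Arguments.
Unset Strict Implicit.

(* If the stabiliser of an apartment Sigma = g Sigma0 in H
   is transitive on its chambers, then for n in N an element h of H with h (g C0) = g n C0
   gives t := n^-1 g^-1 h g, which stabilises Sigma0 and fixes C0, hence fixes all of
   Sigma0 (an automorphism of an apartment fixing one chamber is trivial on it); thus
   h = g n t g^-1 lies in g (nT) g^-1.  Conversely, strong transitivity makes N
   transitive on the chambers of Sigma0, so the elements g n t g^-1 of H make the
   H-stabiliser of g Sigma0 transitive on its chambers. *)

Section GroupLaws.
Variable G : Grp.

Lemma gmul_cancel_l (a x y : G) : gmul a x = gmul a y -> x = y.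
Proof.
  intro E. rewrite <- (gmul1 x), <- (gmul1 y), <- (gmulV a), <- !gmulA, E.
  reflexivity.
Qed.

Lemma gmulVr (x : G) : gmul x (ginv x) = gone.
Proof.
  rewrite <- (gmul1 (gmul x (ginv x))).
  rewrite <- (gmulV (ginv x)) at 1.
  rewrite <- gmulA, (gmulA (ginv x) x), gmulV, gmul1. apply gmulV.
Qed.

Lemma gmulr1 (x : G) : gmul x gone = x.
Proof. rewrite <- (gmulV x), gmulA, gmulVr, gmul1. reflexivity. Qed.

Lemma gmulKV (x y : G) : gmul x (gmul (ginv x) y) = y.
Proof. rewrite gmulA, gmulVr, gmul1. reflexivity. Qed.

Lemma gconjK (g h : G) : gmul g (gmul (gmul (ginv g) (gmul h g)) (ginv g)) = h.
Proof. rewrite <- gmulA, gmulKV, <- gmulA, gmulVr, gmulr1. reflexivity. Qed.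
End GroupLaws.

Definition image (G : Grp) (Ch : Type) (act : G -> Ch -> Ch) (g : G) (A : Ch -> Prop)
  : Ch -> Prop :=
  fun D => exists E, A E /\ act g E = D.

Definition carries (G : Grp) (Ch : Type) (act : G -> Ch -> Ch) (g : G) (A B : Ch -> Prop)
  : Prop :=
  forall D, B D <-> image act g A D.

Definition fixes (G : Grp) (Ch : Type) (act : G -> Ch -> Ch) (g : G) (A : Ch -> Prop)
  : Prop :=
  forall C, A C -> act g C = C.

Lemma apartment_inhabited (W : Grp) (Ch : Type) (delta : Ch -> Ch -> W) Sigma :
  apartment delta Sigma -> exists C, Sigma C.
Proof.
  intros [phi [_ Hin]]. exists (phi gone). apply Hin. eauto.
Qed.

Section TypePreservingAction.
Variables (W G : Grp) (Ch : Type) (delta : Ch -> Ch -> W) (act : G -> Ch -> Ch).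
Hypothesis Hact : is_tp_action delta act.

Lemma act_mul g h C : act (gmul g h) C = act g (act h C).
Proof. apply Hact. Qed.

Lemma act_invK (g : G) C : act (ginv g) (act g C) = C.
Proof. rewrite <- act_mul, gmulV. apply Hact. Qed.

Lemma carries_image g A : carries act g A (image act g A).
Proof. intro; tauto. Qed.

Lemma carries_inv g A B : carries act g A B -> carries act (ginv g) B A.
Proof.
  intros M D; split.
  - intro HA. exists (act g D). split; [apply M; exists D; auto | apply act_invK].
  - intros [E [HE <-]]. apply M in HE. destruct HE as [E' [HE' <-]].
    rewrite act_invK. exact HE'.
Qed.

Lemma carries_mul g h A B C :
  carries act g A B -> carries act h B C -> carries act (gmul h g) A C.
Proof.
  intros M1 M2 D; split.
  - intro HC. apply M2 in HC. destruct HC as [F [HF <-]].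
    apply M1 in HF. destruct HF as [E [HE <-]]. exists E. rewrite act_mul. auto.
  - intros [E [HE <-]]. rewrite act_mul. apply M2. exists (act g E).
    split; auto. apply M1. exists E; auto.
Qed.

Lemma apartment_image g Sigma :
  apartment delta Sigma -> apartment delta (image act g Sigma).
Proof.
  intros [phi [Hiso Hin]]. exists (fun x => act g (phi x)). split.
  - intros x y. destruct Hact as [_ [_ Hdelta]]. rewrite Hdelta. apply Hiso.
  - intro D. split.
    + intros [E [HE <-]]. apply Hin in HE. destruct HE as [x <-]. eauto.
    + intros [x <-]. exists (phi x). split; auto. apply Hin; eauto.
Qed.

(* Both t C0 and t E lie in Sigma, so the W-distances delta C0 E = delta C0 (t E)
   force E and t E to have the same coordinate in Sigma. *)
Lemma fixes_apartment_of_fixes_chamber Sigma t C0 :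
  apartment delta Sigma -> carries act t Sigma Sigma ->
  Sigma C0 -> act t C0 = C0 -> fixes act t Sigma.
Proof.
  intros [phi [Hiso Hin]] M HC0 Ht E HE.
  assert (HtE : Sigma (act t E)) by (apply M; exists E; auto).
  apply Hin in HC0; apply Hin in HE; apply Hin in HtE.
  destruct HC0 as [x Hx], HE as [y Hy], HtE as [z Hz].
  assert (Hzy : gmul (ginv x) z = gmul (ginv x) y).
  { rewrite <- !Hiso, Hx, Hy, Hz. rewrite <- Ht at 1. apply Hact. }
  apply gmul_cancel_l in Hzy. rewrite <- Hz, <- Hy, Hzy. reflexivity.
Qed.

Variables (Sigma0 : Ch -> Prop) (H : G -> Prop).
Hypothesis Hst : strongly_transitive delta act (fun _ => True).
Hypothesis Hap0 : apartment delta Sigma0.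

Lemma conj_coset_of_weakly_transitive :
  weakly_transitive delta act H ->
  exists g, forall n, carries act n Sigma0 Sigma0 ->
    exists t, (carries act t Sigma0 Sigma0 /\ fixes act t Sigma0) /\
      H (gmul g (gmul (gmul n t) (ginv g))).
Proof.
  intros [Sigma [HapS Htr]].
  destruct (apartment_inhabited Hap0) as [C0 HC0].
  destruct (apartment_inhabited HapS) as [C1 HC1].
  destruct (Hst Hap0 HC0 HapS HC1) as [g [_ [Hg Mg]]].
  exists g. intros n Mn.
  assert (HgnC0 : Sigma (act g (act n C0))).
  { apply Mg. exists (act n C0). split; auto. apply Mn. exists C0; auto. }
  destruct (Htr _ _ HC1 HgnC0) as [h [Hh [Mh HhC1]]].
  set (t := gmul (ginv n) (gmul (ginv g) (gmul h g))).
  assert (Mt : carries act t Sigma0 Sigma0).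
  { apply (carries_mul (B := Sigma0)); [| apply carries_inv; exact Mn].
    apply (carries_mul (B := Sigma)); [| apply carries_inv; exact Mg].
    apply (carries_mul Mg Mh). }
  exists t. split; [split; [exact Mt|] |].
  - apply (fixes_apartment_of_fixes_chamber Hap0 Mt HC0).
    unfold t. rewrite !act_mul, Hg, HhC1, !act_invK. reflexivity.
  - unfold t. rewrite gmulKV, gconjK. exact Hh.
Qed.

Lemma weakly_transitive_of_conj_coset g :
  (forall n, carries act n Sigma0 Sigma0 ->
    exists t, (carries act t Sigma0 Sigma0 /\ fixes act t Sigma0) /\
      H (gmul g (gmul (gmul n t) (ginv g)))) ->
  weakly_transitive delta act H.
Proof.
  intros Hg. exists (image act g Sigma0). split; [apply apartment_image; exact Hap0 |].
  intros C D [C' [HC' <-]] [D' [HD' <-]].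
  destruct (Hst Hap0 HC' Hap0 HD') as [n [_ [HnC' Mn]]].
  destruct (Hg n Mn) as [t [[Mt Ht] Hh]].
  eexists. split; [exact Hh | split].
  - apply (carries_mul (B := Sigma0)); [| apply carries_image].
    apply (carries_mul (B := Sigma0)); [apply carries_inv, carries_image |].
    apply (carries_mul Mt Mn).
  - rewrite !act_mul, act_invK, Ht, HnC' by exact HC'. reflexivity.
Qed.
End TypePreservingAction.

Theorem lemma2p3 (W : Grp) (S : W -> Prop) (Ch : Type) (delta : Ch -> Ch -> W)
  (G : Grp) (act : G -> Ch -> Ch) (Sigma0 : Ch -> Prop) (H : G -> Prop) :
  coxeter_system S -> finite_rank S ->
  is_building S delta -> thick S delta ->
  is_tp_action delta act ->
  strongly_transitive delta act (fun _ => True) ->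
  apartment delta Sigma0 ->
  is_subgroup H ->
  let N := fun n : G => stabilizes act n Sigma0 in
  let T := fun t : G => N t /\ forall C, Sigma0 C -> act t C = C in
  weakly_transitive delta act H <->
  exists g : G, forall n : G, N n ->
    exists t : G, T t /\ H (gmul g (gmul (gmul n t) (ginv g))).
Proof.
  intros _ _ _ _ Hact Hst Hap0 _ N T. split.
  - exact (conj_coset_of_weakly_transitive Hact Hst Hap0).
  - intros [g Hg]. exact (weakly_transitive_of_conj_coset Hact Hst Hap0 Hg).
Qed.
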